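(* Let $\Gamma$ be a class of continuous, nondecreasing, nonnegative functions $\mathbb{R}\to\mathbb{R}$ such that for every compact $K\subset\mathbb{R}$, every continuous nondecreasing nonnegative $h:K\to\mathbb{R}$ and every $\eta>0$ there is $\gamma\in\Gamma$ with $\sup_K|h-\gamma|<\eta$. Let $\mathcal{G}$ be a class of convex real functions that are continuously differentiable on an open set containing $[0,1]^d$, such that for every $R(\boldsymbol{x})=\sum_{i=1}^N\psi_i(\boldsymbol{a}_i^\top\boldsymbol{x}+b_i)$ with each $\psi_i\in C^1(\mathbb{R})$ convex, and every $\eta>0$, there is $G\in\mathcal{G}$ with $\sup_{[0,1]^d}\|\nabla R-\nabla G\|<\eta$. Let $F(\boldsymbol{x})=T\big(\sum_{i=1}^N\psi_i(\boldsymbol{a}_i^\top\boldsymbol{x}+b_i)\big)$ on $[0,1]^d$, where $T\in C^1(\mathbb{R})$ is convex and nondecreasing and each $\psi_i\in C^1(\mathbb{R})$ is convex. Then for every $\epsilon>0$ there exist $\gamma\in\Gamma$, $G\in\mathcal{G}$ and $\beta\in\mathbb{R}$ such that $h(\boldsymbol{x})=\gamma(G(\boldsymbol{x})+\beta)\nabla G(\boldsymbol{x})$ satisfies $\sup_{\boldsymbol{x}\in[0,1]^d}\|\nabla F(\boldsymbol{x})-h(\boldsymbol{x})\|<\epsilon$. Moreover every such $h$ (with $\gamma\in\Gamma$, $G\in\mathcal{G}$, $\beta\in\mathbb{R}$) is the gradient of a convex $C^1$ function on $[0,1]^d$.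
   Context: $C^1(\mathbb{R})$: continuously differentiable real functions on $\mathbb{R}$. $\|\cdot\|$ is the Euclidean norm. *)

(* R : realType, points of R^d are row vectors 'rV[R]_d. *)
From HB Require Import structures.
From mathcomp Require Import all_boot all_order all_algebra.
From mathcomp Require Import all_classical all_reals all_analysis.
Set Implicit Arguments. Unset Strict Implicit. Unset Printing Implicit Defensive.
Import Order.TTheory GRing.Theory Num.Theory.
Import numFieldNormedType.Exports.
Local Open Scope classical_set_scope.
Local Open Scope ring_scope.

Section Defs.
Variable R : realType.

Definition cube (d : nat) : set 'rV[R]_d :=
  [set x | forall i : 'I_d, 0 <= x ord0 i <= 1].
Arguments cube : clear implicits.

Definition dotv (d : nat) (a x : 'rV[R]_d) : R := \sum_(i < d) a ord0 i * x ord0 i.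
Definition enorm (d : nat) (v : 'rV[R]_d) : R := Num.sqrt (\sum_(i < d) v ord0 i ^+ 2).

Definition grad (d : nat) (f : 'rV[R]_d -> R) (x : 'rV[R]_d) : 'rV[R]_d :=
  \row_(i < d) 'D_(delta_mx ord0 i) f x.

Definition C1_on (d : nat) (U : set 'rV[R]_d) (f : 'rV[R]_d -> R) : Prop :=
  open U /\ (forall x, U x -> differentiable f x) /\
  (forall x, U x -> {for x, continuous (grad f)}).

Definition C1_near_cube (d : nat) (f : 'rV[R]_d -> R) : Prop :=
  exists U : set 'rV[R]_d, cube d `<=` U /\ C1_on U f.

Definition convex_on (d : nat) (S : set 'rV[R]_d) (f : 'rV[R]_d -> R) : Prop :=
  forall x y, S x -> S y -> forall t : R, 0 <= t <= 1 ->
    f (t *: x + (1 - t) *: y) <= t * f x + (1 - t) * f y.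

Definition convex_fun1 (f : R -> R) : Prop :=
  forall x y t : R, 0 <= t <= 1 -> f (t * x + (1 - t) * y) <= t * f x + (1 - t) * f y.

Definition C1_real (f : R -> R) : Prop :=
  (forall x, derivable f x 1) /\ continuous (derive1 f).

Definition nondecr (f : R -> R) : Prop := forall x y, x <= y -> f x <= f y.

Definition Gamma_fun (g : R -> R) : Prop :=
  continuous g /\ nondecr g /\ (forall x, 0 <= g x).

Definition ridge_sum (d N : nat) (psi : 'I_N -> R -> R) (a : 'I_N -> 'rV[R]_d)
  (b : 'I_N -> R) (x : 'rV[R]_d) : R :=
  \sum_(i < N) psi i (dotv (a i) x + b i).

(* sup_{x in S} |u x| < eta, stated as: bounded by some c < eta *)
Definition sup_lt (T : Type) (S : set T) (u : T -> R) (eta : R) : Prop :=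
  exists c, c < eta /\ forall x, S x -> u x <= c.

End Defs.
Arguments cube {R} d.

From HB Require Import structures.
From mathcomp Require Import all_boot all_order all_algebra.
From mathcomp Require Import all_classical all_reals all_analysis.
From mathcomp Require Import ring lra.
Import Order.TTheory GRing.Theory Num.Theory.
Import numFieldNormedType.Exports.
Local Open Scope classical_set_scope.
Local Open Scope ring_scope.

(* Write R for the ridge sum, so that grad F = T'(R) grad R. As T is convex
   and nondecreasing, T' is continuous, nondecreasing and nonnegative, hence it
   is uniformly approximated by some g in Gamma on an interval containing the
   values of R on the cube. Take G in GG with grad G uniformly close to grad R
   and beta = R(0) - G(0): by the mean value theorem G + beta is uniformly
   close to R, and uniform continuity of T' makes T'(R) grad R close to
   g(G + beta) grad G. Conversely, an antiderivative k of g is convex and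
   nondecreasing, so k(G + beta) is a convex C^1 potential for
   g(G + beta) grad G. *)

Section RealFunctions.
Context {R : realType}.
Implicit Types (f k : R -> R).

Lemma derive1_cvg_at_right {f x} : derivable f x 1 ->
  (fun h => h^-1 * (f (h + x) - f x)) @ 0^'+ --> derive1 f x.
Proof.
move=> fx; have := cvg_lim (@Rhausdorff R) fx.
rewrite derive1E /derive => <- A /fx; rewrite /= !near_simpl /prop_near1 /= /within /=.
move=> [r /= r0 Hr]; exists r => // y ry yp /=.
by have := Hr y ry (lt0r_neq0 yp); rewrite /= [y%:A]mulr1.
Qed.

Lemma derive1_ge_right_quotient f x c e : 0 < e -> derivable f x 1 ->
  (forall h, 0 < h < e -> c <= (f (h + x) - f x) / h) -> c <= derive1 f x.
Proof.
move=> e0 fx qc; apply: (cvgr_to_ge (derive1_cvg_at_right fx)).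
near=> h; rewrite mulrC; apply: qc; apply/andP; split.
- by near: h; exact: nbhs_right_gt.
- by near: h; exact: nbhs_right_lt.
Unshelve. all: by end_near.
Qed.

Lemma derive1_le_right_quotient f x c e : 0 < e -> derivable f x 1 ->
  (forall h, 0 < h < e -> (f (h + x) - f x) / h <= c) -> derive1 f x <= c.
Proof.
move=> e0 fx qc; apply: (cvgr_to_le (derive1_cvg_at_right fx)).
near=> h; rewrite mulrC; apply: qc; apply/andP; split.
- by near: h; exact: nbhs_right_gt.
- by near: h; exact: nbhs_right_lt.
Unshelve. all: by end_near.
Qed.

Lemma convex_slope_mono f x z y : convex_fun1 f -> x < z -> z < y ->
  (f z - f x) / (z - x) <= (f y - f x) / (y - x).
Proof.
move=> cf xz zy.
have zx0 : 0 < z - x by rewrite subr_gt0.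
have yx0 : 0 < y - x by rewrite subr_gt0; exact: lt_trans zy.
set t := (z - x) / (y - x).
have t01 : 0 <= t <= 1.
  apply/andP; split; first by rewrite divr_ge0 // ltW.
  by rewrite ler_pdivrMr // mul1r lerD2r ltW.
have := cf y x t t01.
have -> : t * y + (1 - t) * x = z by rewrite /t; field; rewrite gt_eqF.
have ht : t * (y - x) = z - x by rewrite /t; field; rewrite gt_eqF.
move=> fz; rewrite ler_pdivrMr // mulrAC ler_pdivlMr //.
have : f z - f x <= t * (f y - f x) by lra.
by move/(ler_wpM2r (ltW yx0)); nra.
Qed.

Lemma convex_slope_consecutive f x y w : convex_fun1 f -> x < y -> y < w ->
  (f y - f x) / (y - x) <= (f w - f y) / (w - y).
Proof.
move=> cf xy yw.
have yx0 : 0 < y - x by rewrite subr_gt0.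
have wy0 : 0 < w - y by rewrite subr_gt0.
have wx0 : 0 < w - x by rewrite subr_gt0; exact: lt_trans yw.
set t := (y - x) / (w - x).
have t01 : 0 <= t <= 1.
  apply/andP; split; first by rewrite divr_ge0 // ltW.
  by rewrite ler_pdivrMr // mul1r lerD2r ltW.
have := cf w x t t01.
have -> : t * w + (1 - t) * x = y by rewrite /t; field; rewrite gt_eqF.
have -> : 1 - t = (w - y) / (w - x) by rewrite /t; field; rewrite gt_eqF.
move=> fy; rewrite ler_pdivrMr // mulrAC ler_pdivlMr //.
have := ler_wpM2r (ltW wx0) fy.
have e (u A : R) : u / (w - x) * A * (w - x) = u * A by field; rewrite gt_eqF.
rewrite mulrDl /t !e; nra.
Qed.

Lemma convex_derive1_nondecr f x y : convex_fun1 f ->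
  (forall z, derivable f z 1) -> x <= y -> derive1 f x <= derive1 f y.
Proof.
move=> cf df; rewrite le_eqVlt => /predU1P[->//|xy].
have yx0 : 0 < y - x by rewrite subr_gt0.
apply: (@le_trans _ _ ((f y - f x) / (y - x))).
  apply: (@derive1_le_right_quotient _ _ _ (y - x)) => // h /andP[h0 hyx].
  rewrite -[h in _ / h](addrK x).
  by apply: convex_slope_mono => //; [rewrite ltrDr | rewrite -ltrBrDr].
apply: (@derive1_ge_right_quotient _ _ _ 1) => // h /andP[h0 _].
rewrite -[h in _ <= _ / h](addrK y).
by apply: convex_slope_consecutive => //; rewrite ltrDr.
Qed.

Lemma nondecr_derive1_ge0 f x : nondecr f -> derivable f x 1 -> 0 <= derive1 f x.
Proof.
move=> nf fx; apply: (@derive1_ge_right_quotient _ _ _ 1) => // h /andP[h0 _].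
by rewrite divr_ge0 ?subr_ge0 ?(ltW h0) // nf // lerDr ltW.
Qed.

Lemma compact_uniform_continuous {f} {K : set R} {e} :
  compact K -> continuous f -> 0 < e ->
  exists2 del, 0 < del & forall x y, K x -> `|x - y| < del -> `|f x - f y| < e.
Proof.
move=> cK cf e0.
have local x : K x -> \forall x' \near x & del \near 0^'+,
    forall y, `|x' - y| < del -> `|f x' - f y| < e.
  move=> Kx; have : \forall t \near x, `|f x - f t| < e / 2.
    by apply: (@cvgr_dist_lt _ _ _ (nbhs x)); [exact: cf | rewrite divr_gt0].
  move=> /nbhs_ballP [r /= r0 fr].
  have r20 : 0 < r / 2 by rewrite divr_gt0.
  exists (ball x (r / 2), (fun del : R => (0 < del < r / 2 : Prop))) => /=.
    split; first exact: nbhsx_ballx.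
    exists (r / 2) => //= del; rewrite /ball /= sub0r normrN => dr d0.
    by rewrite d0 -(gtr0_norm d0).
  case=> x' del /= [xx' /andP[d0 dr]] y x'y; rewrite /ball /= in xx'.
  have fx' : `|f x - f x'| < e / 2.
    by apply: fr; rewrite /ball /=; apply: lt_trans xx' _; rewrite ltr_pdivrMr // ltr_pMr // ltr1n.
  have fy : `|f x - f y| < e / 2.
    apply: fr; rewrite /ball /= -(subrKA x'); apply: le_lt_trans (ler_normD _ _) _.
    by rewrite (splitr r); apply: ltrD => //; apply: lt_trans dr.
  rewrite -(subrKA (f x)) (le_lt_trans (ler_normD _ _)) // distrC.
  by rewrite (splitr e) ltrD.
have [r /= r0 fr] := (compact_near_coveringP K).1 cK R (0^'+)
  (fun del x => forall y, `|x - y| < del -> `|f x - f y| < e) _ local.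
exists (r / 2); first by rewrite divr_gt0.
move=> x y Kx; apply: (fr (r / 2)) => //; last by rewrite divr_gt0.
by rewrite /ball /= sub0r normrN gtr0_norm ?divr_gt0 // ltr_pdivrMr // ltr_pMr // ltr1n.
Qed.

Lemma MVT_right_of {k a0 u w} : (forall y, a0 < y -> derivable k y 1) ->
  a0 < u -> u <= w -> exists2 c, u <= c <= w & k w - k u = derive1 k c * (w - u).
Proof.
move=> dk au uw.
have [||c cin E] := @MVT_segment R k (derive1 k) u w uw.
- move=> x; rewrite in_itv /= => /andP[ux _].
  by rewrite derive1E; apply/derivableP/dk/(lt_trans au).
- apply: continuous_in_subspaceT => x; rewrite inE /= in_itv /= => /andP[ux _].
  exact/differentiable_continuous/derivable1_diffP/dk/(lt_le_trans au).
- by exists c => //; rewrite in_itv /= in cin.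
Qed.

Lemma derive1_ge0_nondecr_right k a0 : (forall y, a0 < y -> derivable k y 1) ->
  (forall y, a0 < y -> 0 <= derive1 k y) ->
  forall u w, a0 < u -> u <= w -> k u <= k w.
Proof.
move=> dk pk u w au uw; have [c /andP[uc _] E] := MVT_right_of dk au uw.
by rewrite -subr_ge0 E mulr_ge0 ?subr_ge0 // pk // (lt_le_trans au).
Qed.

Lemma derive1_nondecr_convex_right k a0 : (forall y, a0 < y -> derivable k y 1) ->
  (forall y z, a0 < y -> y <= z -> derive1 k y <= derive1 k z) ->
  forall u w t, a0 < u -> a0 < w -> 0 <= t <= 1 ->
    k (t * u + (1 - t) * w) <= t * k u + (1 - t) * k w.
Proof.
move=> dk mk.
suff ordered u w t : a0 < u -> u <= w -> 0 <= t <= 1 ->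
    k (t * u + (1 - t) * w) <= t * k u + (1 - t) * k w.
  move=> u w t au aw t01; have [uw|wu] := leP u w; first exact: ordered.
  have t01' : 0 <= 1 - t <= 1 by case/andP: t01 => ? ?; apply/andP; split; lra.
  have := ordered w u (1 - t) aw (ltW wu) t01'.
  by rewrite subKr addrC [X in _ <= X]addrC.
move=> au uw /andP[t0 t1]; set z := t * u + (1 - t) * w.
have uz : u <= z by rewrite /z; nra.
have zw : z <= w by rewrite /z; nra.
have [c1 /andP[uc1 c1z] E1] := MVT_right_of dk au uz.
have [c2 /andP[zc2 c2w] E2] := MVT_right_of dk (lt_le_trans au uz) zw.
have m12 : derive1 k c1 <= derive1 k c2.
  by apply: mk (le_trans c1z zc2); exact: lt_le_trans uc1.
have ez1 : z - u = (1 - t) * (w - u) by rewrite /z; ring.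
have ez2 : w - z = t * (w - u) by rewrite /z; ring.
rewrite ez1 in E1; rewrite ez2 in E2.
have : 0 <= t * (1 - t) * (w - u) * (derive1 k c2 - derive1 k c1).
  by rewrite !mulr_ge0 // subr_ge0.
nra.
Qed.

Lemma continuous_antiderivative g a0 : continuous g ->
  exists k, forall y, a0 < y -> derivable k y 1 /\ derive1 k y = g y.
Proof.
move=> cg; exists (fun x => \int[@lebesgue_measure R]_(t in `[a0, x]) g t)%R.
move=> y ay; apply: (@continuous_FTC1_closed R g a0 y (y + 1)) => //.
- by rewrite ltrDl.
- apply: continuous_compact_integrable; first exact: segment_compact.
  exact: continuous_subspaceT.
- exact: cg.
Qed.

Lemma Gamma_fun_antiderivative g a0 : Gamma_fun g -> exists k,
  [/\ forall y, a0 < y -> derivable k y 1 /\ derive1 k y = g y,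
      forall u w, a0 < u -> u <= w -> k u <= k w &
      forall u w t, a0 < u -> a0 < w -> 0 <= t <= 1 ->
        k (t * u + (1 - t) * w) <= t * k u + (1 - t) * k w].
Proof.
move=> [cg [ng pg]]; have [k dk] := continuous_antiderivative g a0 cg.
exists k; split => //.
- by apply: derive1_ge0_nondecr_right => y /dk[// _ ->].
- apply: derive1_nondecr_convex_right => [y /dk[] //|y z ay yz].
  by rewrite (dk _ ay).2 (dk _ (lt_le_trans ay yz)).2 ng.
Qed.
End RealFunctions.

Section Cube.
Context {R : realType} {d : nat}.
Local Notation V := 'rV[R]_d.
Implicit Types (f G : V -> R) (x y : V).

Lemma cube_compact : compact (cube d : set V).
Proof.
have -> : (cube d : set V) = [set v : V | forall i, `[(0:R), 1]%classic (v ord0 i)].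
  by apply/funext => v; apply/propext; split => H i; move: (H i) => /=; rewrite in_itv.
exact: (@rV_compact R d (fun=> `[(0:R), 1]%classic) (fun=> @segment_compact _ 0 1)).
Qed.

Lemma cube0 : cube d (0 : V).
Proof. by move=> i; rewrite mxE lexx ler01. Qed.

Lemma cube_convex {x y} {t : R} : cube d x -> cube d y -> 0 <= t <= 1 ->
  cube d (t *: x + (1 - t) *: y).
Proof.
move=> cx cy /andP[t0 t1] i; rewrite !mxE.
by have /andP[? ?] := cx i; have /andP[? ?] := cy i; apply/andP; split; nra.
Qed.

Lemma cube_scale {x} {t : R} : cube d x -> 0 <= t <= 1 -> cube d (t *: x).
Proof. by move=> cx /(cube_convex cx cube0); rewrite scaler0 addr0. Qed.

Lemma cube_value_bounds {f} : {within cube d, continuous f} ->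
  exists m M, forall x, cube d x -> m <= f x <= M.
Proof.
move=> cf; have cube_neq0 : (cube d : set V) !=set0 by exists 0; exact: cube0.
have [xm _ fm] := EVT_min_rV cube_neq0 cube_compact cf.
have [xM _ fM] := EVT_max_rV cube_neq0 cube_compact cf.
by exists (f xm), (f xM) => x cx; rewrite fm ?fM ?inE.
Qed.

Lemma diff_sum_partials f p w : differentiable f p ->
  'd f p w = \sum_(i < d) w ord0 i * 'D_(delta_mx ord0 i) f p.
Proof.
move=> df; rewrite [w in LHS]row_sum_delta linear_sum; apply: eq_bigr => i _.
by rewrite linearZ deriveE.
Qed.

Lemma grad_comp {f} {k : R -> R} {x} : differentiable f x -> derivable k (f x) 1 ->
  differentiable (k \o f) x /\ grad (k \o f) x = derive1 k (f x) *: grad f x.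
Proof.
move=> df dk; have dk' := dk; move/derivable1_diffP in dk'.
have dkf : differentiable (k \o f) x by apply: differentiable_comp.
split => //; apply/rowP => i; rewrite !mxE deriveE // diff_comp //= deriv1E //.
by rewrite deriveE // mulrC.
Qed.

(* Mean value theorem along the segment [0, x], which lies in the cube. *)
Lemma cube_dist0_le f c : (forall p, cube d p -> differentiable f p) ->
  (forall p i, cube d p -> `|'D_(delta_mx ord0 i) f p| <= c) ->
  forall x, cube d x -> `|f x - f 0| <= d%:R * c.
Proof.
move=> df dc x cx; pose h t := f (t *: x).
have dh (t : R) : 0 <= t <= 1 -> differentiable h t /\ 'd h t 1 = 'd f (t *: x) x.
  move=> t01; have dft := df _ (cube_scale cx t01).
  have ds : differentiable (fun s : R => s *: x) t.
    exact: (ex_diff (is_diff_def := is_diff_scalel t x)).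
  have -> : h = f \o (fun s : R => s *: x) by [].
  split; first exact: differentiable_comp.
  by rewrite diff_comp // /= (diff_val (is_diff_def := is_diff_scalel t x)) scale1r.
have [c0 c01 E] : exists2 c0, c0 \in `[(0:R), 1] &
    h 1 - h 0 = 'd f (c0 *: x) x * (1 - 0).
  apply: MVT_segment; first exact: ler01.
    move=> t; rewrite in_itv /= => /andP[t0 t1].
    have t01 : 0 <= t <= 1 by rewrite !ltW.
    have [dht <-] := dh t t01.
    by rewrite -deriveE //; apply/derivableP/derivable1_diffP.
  apply: continuous_in_subspaceT => t; rewrite inE /= in_itv /= => t01.
  by apply: differentiable_continuous; case: (dh t t01).
move: E; rewrite /h scale1r scale0r subr0 mulr1 => ->.
rewrite in_itv /= in c01.
rewrite diff_sum_partials; last exact: df (cube_scale cx c01).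
rewrite (le_trans (ler_norm_sum _ _ _)) //.
have -> : d%:R * c = \sum_(i < d) c by rewrite sumr_const card_ord mulr_natl.
apply: ler_sum => i _; rewrite normrM.
have /andP[xi0 xi1] := cx i.
rewrite ger0_norm //; apply: le_trans (dc _ i (cube_scale cx c01)).
by rewrite ler_piMl.
Qed.

Lemma enorm_coord (v : V) i : `|v ord0 i| <= enorm v.
Proof.
rewrite /enorm -sqrtr_sqr ler_wsqrtr //.
by rewrite (bigD1 i) //= lerDl sumr_ge0 // => j _; exact: sqr_ge0.
Qed.

Lemma enorm_coord_sub (u v : V) i : `|u ord0 i - v ord0 i| <= enorm (u - v).
Proof. by have := enorm_coord (u - v) i; rewrite !mxE. Qed.

Lemma enorm_le_sum (v : V) : enorm v <= \sum_(i < d) `|v ord0 i|.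
Proof.
have [] : \sum_(i < d) v ord0 i ^+ 2 <= (\sum_(i < d) `|v ord0 i|) ^+ 2
    /\ 0 <= \sum_(i < d) `|v ord0 i|.
  apply: (big_ind2 (fun s t : R => s <= t ^+ 2 /\ 0 <= t)).
  - by rewrite expr0n /= lexx.
  - by move=> s1 s2 t1 t2 [? ?] [? ?]; split; [nra | exact: addr_ge0].
  - by move=> i _; rewrite real_normK ?num_real // lexx normr_ge0.
by move=> le_sq ge0; rewrite /enorm -(ger0_norm ge0) -sqrtr_sqr ler_wsqrtr.
Qed.

Lemma enorm_scale_sub_le {u v : V} {p q B eta : R} : 0 <= q ->
  (forall i, `|u ord0 i| <= B) -> (forall i, `|u ord0 i - v ord0 i| <= eta) ->
  enorm (p *: u - q *: v) <= d%:R * (`|p - q| * B + q * eta).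
Proof.
move=> q0 uB uv; apply: le_trans (enorm_le_sum _) _.
have -> : d%:R * (`|p - q| * B + q * eta) = \sum_(i < d) (`|p - q| * B + q * eta).
  by rewrite sumr_const card_ord mulr_natl.
apply: ler_sum => i _; rewrite !mxE.
have -> : p * u ord0 i - q * v ord0 i =
  (p - q) * u ord0 i + q * (u ord0 i - v ord0 i) by ring.
rewrite (le_trans (ler_normD _ _)) // !normrM (ger0_norm q0).
by rewrite lerD ?ler_wpM2l.
Qed.

Lemma differentiable_dotv (c : V) x : differentiable (dotv c) x.
Proof.
have -> : dotv c = \sum_(j < d) (c ord0 j *: (fun y : V => y ord0 j)).
  by rewrite fct_sumE; apply/funext => y; rewrite /dotv; apply: eq_bigr.
apply: differentiable_sum => j; apply: differentiableZ.
exact: differentiable_coord.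
Qed.

Lemma differentiable_ridge_sum N (psi : 'I_N -> R -> R) (a : 'I_N -> V)
    (b : 'I_N -> R) x :
  (forall i (y : R), derivable (psi i) y 1) -> differentiable (ridge_sum psi a b) x.
Proof.
move=> dpsi.
have -> : ridge_sum psi a b = \sum_(i < N) (fun y => psi i (dotv (a i) y + b i)).
  by rewrite fct_sumE; apply/funext => y.
apply: differentiable_sum => i.
apply: (@differentiable_comp _ _ _ _ (fun y => dotv (a i) y + b i) (psi i)).
  apply: (@differentiableD _ _ _ (dotv (a i)) (cst (b i))).
    exact: differentiable_dotv.
  exact: differentiable_cst.
exact/derivable1_diffP/dpsi.
Qed.

Lemma C1_near_cube_grad_bounded {G} : C1_near_cube G ->
  exists2 B, 0 <= B & forall x i, cube d x -> `|grad G x ord0 i| <= B.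
Proof.
move=> [U [cU [_ [_ cgU]]]].
have cont i : {within cube d, continuous (fun x => `|grad G x ord0 i|)}.
  apply: continuous_in_subspaceT => x; rewrite inE => cx.
  apply: (@continuous_comp _ _ _ (fun x => grad G x ord0 i) Num.norm).
    apply: (@continuous_comp _ _ _ (grad G) (fun M : V => M ord0 i)).
      exact: cgU (cU _ cx).
    exact: coord_continuous.
  exact: norm_continuous.
have bound i : exists M : R, forall x, cube d x -> `|grad G x ord0 i| <= M.
  by have [m [M mM]] := cube_value_bounds (cont i); exists M => x /mM /andP[].
have [Bf Bf_bound] := fin_all_exists bound.
exists (\sum_(i < d) `|Bf i|) => [|x i cx]; first exact: sumr_ge0.
rewrite (le_trans (Bf_bound i x cx)) // (le_trans (ler_norm _)) //.
by rewrite (bigD1 i) //= lerDl sumr_ge0.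
Qed.

Lemma C1_on_comp {U : set V} {G} {k g : R -> R} {a0 : R} : C1_on U G -> continuous g ->
  (forall y : R, a0 < y -> derivable k y 1 /\ derive1 k y = g y) ->
  C1_on (U `&` [set x | a0 < G x]) (k \o G) /\
  forall x, U x -> a0 < G x -> grad (k \o G) x = g (G x) *: grad G x.
Proof.
move=> [oU [dG cgG]] cg dk.
have gradkG x : U x -> a0 < G x ->
    differentiable (k \o G) x /\ grad (k \o G) x = g (G x) *: grad G x.
  move=> Ux aGx; have [dkG ->] := grad_comp (dG _ Ux) (dk _ aGx).1.
  by rewrite (dk _ aGx).2.
have nbhsU' x : U x -> a0 < G x -> nbhs x (U `&` [set x | a0 < G x]).
  move=> Ux aGx; apply: filterI; first by move: oU; rewrite openE => /(_ x Ux).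
  have : \forall t \near x, `|G x - G t| < G x - a0.
    apply: (@cvgr_dist_lt _ _ _ (nbhs x)); last by rewrite subr_gt0.
    exact/differentiable_continuous/dG.
  apply: filterS => t /=; have := ler_norm (G x - G t); lra.
split=> [|x]; last exact: (fun Ux aGx => (gradkG x Ux aGx).2).
split; first by rewrite openE => x [] /nbhsU'; apply.
split=> x [Ux aGx]; first exact: (gradkG x Ux aGx).1.
rewrite /prop_for /continuous_at (gradkG x Ux aGx).2.
have E : \forall y \near x, g (G y) *: grad G y = grad (k \o G) y.
  by apply: filterS (nbhsU' _ Ux aGx) => y [Uy aGy]; rewrite (gradkG y Uy aGy).2.
apply: cvg_trans (near_eq_cvg E) _; apply: continuousZ; last exact: cgG.
exact/continuous_comp/cg/differentiable_continuous/dG.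
Qed.

Lemma convex_on_comp (S : set V) G (k : R -> R) (a0 : R) :
  (forall x y t, S x -> S y -> 0 <= t <= 1 -> S (t *: x + (1 - t) *: y)) ->
  convex_on S G -> (forall x, S x -> a0 < G x) ->
  (forall u w, a0 < u -> u <= w -> k u <= k w) ->
  (forall u w t, a0 < u -> a0 < w -> 0 <= t <= 1 ->
     k (t * u + (1 - t) * w) <= t * k u + (1 - t) * k w) ->
  convex_on S (k \o G).
Proof.
move=> cS cG aG nk ck x y Sx Sy t t01 /=.
apply: le_trans (ck _ _ _ (aG _ Sx) (aG _ Sy) t01); apply: nk; last exact: cG.
exact/aG/cS.
Qed.

Lemma Gamma_fun_grad_potential {g G} : Gamma_fun g -> convex_on setT G ->
  C1_near_cube G -> exists Phi : V -> R, [/\ C1_near_cube Phi,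
    convex_on (cube d) Phi & forall x, cube d x -> grad Phi x = g (G x) *: grad G x].
Proof.
move=> gg cG [U [cU C1G]].
have cGc : {within cube d, continuous G}.
  apply: continuous_in_subspaceT => x; rewrite inE => cx.
  exact/differentiable_continuous/C1G.2.1/cU.
have [m [M Gm]] := cube_value_bounds cGc.
have aG x : cube d x -> m - 1 < G x.
  by move=> /Gm /andP[mG _]; apply: lt_le_trans mG; rewrite gtrBl.
have [k [dk nk ck]] := Gamma_fun_antiderivative g (m - 1) gg.
have [C1kG gradkG] := C1_on_comp C1G gg.1 dk.
exists (k \o G); split.
- by exists (U `&` [set x | m - 1 < G x]); split => // x cx; split; [exact: cU | exact: aG].
- apply: convex_on_comp nk ck => //; last by move=> x y _ _; exact: cG.
  by move=> x y t cx cy; exact: cube_convex.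
- by move=> x cx; exact: gradkG (cU _ cx) (aG _ cx).
Qed.

Lemma grad_bounded_of_close {f G c} : C1_near_cube G ->
  (forall x, cube d x -> enorm (grad f x - grad G x) <= c) ->
  exists2 B, 0 <= B & forall x i, cube d x -> `|grad f x ord0 i| <= B.
Proof.
move=> C1G fG; have [BG BG0 GB] := C1_near_cube_grad_bounded C1G.
exists (`|c| + BG) => [|x i cx]; first by rewrite addr_ge0.
rewrite -[grad f x ord0 i](subrK (grad G x ord0 i)) (le_trans (ler_normD _ _)) //.
apply: lerD (GB x i cx); apply: le_trans (ler_norm c).
exact: le_trans (enorm_coord_sub _ _ i) (fG x cx).
Qed.

Lemma cube_shift_close {f G eta} :
  (forall x, cube d x -> differentiable f x) ->
  (forall x, cube d x -> differentiable G x) ->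
  (forall x, cube d x -> enorm (grad f x - grad G x) <= eta) ->
  forall x, cube d x -> `|G x + (f 0 - G 0) - f x| <= d%:R * eta.
Proof.
move=> df dG fG x cx.
have -> : G x + (f 0 - G 0) - f x = (G - f) x - (G - f) 0 by rewrite !fctE; ring.
apply: cube_dist0_le cx => [p cp|p i cp]; first exact: differentiableB (dG p cp) (df p cp).
rewrite deriveB; [| exact: diff_derivable (dG p cp) | exact: diff_derivable (df p cp)].
have := enorm_coord_sub (grad f p) (grad G p) i; rewrite !mxE distrC => /le_trans.
by apply; exact: fG.
Qed.
End Cube.

Lemma exists_small_pos {R : realFieldType} (n : nat) (a b c : R) :
  0 < a -> 0 <= b -> 0 < c -> exists2 eta, 0 < eta & n%:R * eta < a /\ b * eta <= c.
Proof.
move=> a0 b0 c0; have n1 : (0 : R) < n%:R + 1 by rewrite ltr_wpDl.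
exists (Num.min (a / (n%:R + 1)) (c / (b + 1))).
  by rewrite lt_min !divr_gt0 ?ltr_wpDl.
split.
- have : Num.min (a / (n%:R + 1)) (c / (b + 1)) <= a / (n%:R + 1) by rewrite ge_min lexx.
  rewrite ler_pdivlMr //; have := ler0n R n; nra.
- have : Num.min (a / (n%:R + 1)) (c / (b + 1)) <= c / (b + 1) by rewrite ge_min lexx orbT.
  rewrite ler_pdivlMr ?ltr_wpDl //.
  have : 0 < Num.min (a / (n%:R + 1)) (c / (b + 1)) by rewrite lt_min !divr_gt0 ?ltr_wpDl.
  nra.
Qed.

Lemma Gamma_fun_derive1 {R : realType} {T : R -> R} :
  C1_real T -> convex_fun1 T -> nondecr T -> Gamma_fun (derive1 T).
Proof.
move=> [dT cT'] cT nT; split=> //; split=> [x y|x]; first exact: convex_derive1_nondecr.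
exact: nondecr_derive1_ge0.
Qed.

Lemma Gamma_fun_shift {R : realType} {g : R -> R} (beta : R) :
  Gamma_fun g -> Gamma_fun (fun y => g (y + beta)).
Proof.
move=> [cg [ng pg]]; split; last by split=> [x y xy|x]; [rewrite ng ?lerD2r | ].
move=> x; apply: continuous_comp; last exact: cg.
by apply: cvgD; [exact: cvg_id | exact: cvg_cst].
Qed.

Section Approximation.
Context {R : realType} {d : nat}.
Local Notation V := 'rV[R]_d.
Context {Gamma : set (R -> R)} {GG : set (V -> R)}.
Hypothesis HGamma : forall g, Gamma g -> Gamma_fun g.
Hypothesis HGamma_dense : forall (K : set R) (h : R -> R) (eta : R),
  compact K -> {within K, continuous h} ->
  (forall x y, K x -> K y -> x <= y -> h x <= h y) ->
  (forall x, K x -> 0 <= h x) -> 0 < eta ->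
  exists2 g, Gamma g & sup_lt K (fun x => `|h x - g x|) eta.
Hypothesis HGG : forall G, GG G -> convex_on setT G /\ C1_near_cube G.
Hypothesis HGG_dense : forall (N : nat) (psi : 'I_N -> R -> R) (a : 'I_N -> V)
  (b : 'I_N -> R) (eta : R),
  (forall i, C1_real (psi i) /\ convex_fun1 (psi i)) -> 0 < eta ->
  exists2 G, GG G &
    sup_lt (cube d) (fun x => enorm (grad (ridge_sum psi a b) x - grad G x)) eta.

Lemma Gamma_approx_uniform {h : R -> R} {K : set R} {e} :
  Gamma_fun h -> compact K -> 0 < e ->
  exists2 g, Gamma g & exists2 del, 0 < del &
    forall r w, K r -> K w -> `|r - w| < del -> `|h r - g w| < e.
Proof.
move=> [ch [nh ph]] cK e0; have e20 : 0 < e / 2 by rewrite divr_gt0.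
have [del del0 hdel] := compact_uniform_continuous cK ch e20.
have [g Gg [c [ce gc]]] := HGamma_dense _ _ _ cK (continuous_subspaceT ch)
  (fun x y _ _ => nh x y) (fun x _ => ph x) e20.
exists g => //; exists del => // r w Kr Kw rw.
rewrite -(subrKA (h w)) (le_lt_trans (ler_normD _ _)) // (splitr e).
by rewrite ltrD ?hdel // (le_lt_trans (gc w Kw)).
Qed.

Context {N : nat} {psi : 'I_N -> R -> R}.
Variables (a : 'I_N -> V) (b : 'I_N -> R).
Hypothesis Hpsi : forall i, C1_real (psi i) /\ convex_fun1 (psi i).
Let Rf := ridge_sum psi a b.

(* Instead of proving that grad Rf is continuous, compare it with the
   gradient of some G approximating it. *)
Lemma ridge_grad_bounded :
  exists2 B, 0 <= B & forall x i, cube d x -> `|grad Rf x ord0 i| <= B.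
Proof.
have [G GGG [c [_ cG]]] := HGG_dense _ _ a b _ Hpsi ltr01.
exact: (grad_bounded_of_close (HGG _ GGG).2 cG).
Qed.

Lemma ridge_comp_grad_approx {T : R -> R} {eps : R} :
  C1_real T -> convex_fun1 T -> nondecr T -> 0 < eps ->
  exists g G (beta : R), [/\ Gamma g, GG G &
    sup_lt (cube d) (fun x => enorm (grad (T \o Rf) x - g (G x + beta) *: grad G x)) eps].
Proof.
move=> C1T cT nT eps0.
have dRf x : differentiable Rf x.
  by apply: differentiable_ridge_sum => i; case: (Hpsi i) => [[]].
have [m [M mRM]] : exists m M, forall x, cube d x -> m <= Rf x <= M.
  apply: cube_value_bounds; apply: continuous_in_subspaceT => x _.
  exact: differentiable_continuous.
have [B B0 RB] := ridge_grad_bounded.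
have d1 : (0 : R) < d%:R + 1 by rewrite ltr_wpDl.
(* The error will be at most d (e0 B + g (M + 1) eta) <= d e0 (B + 1) < eps. *)
set e0 := eps / ((d%:R + 1) * (B + 1)).
have e00 : 0 < e0 by rewrite divr_gt0 // mulr_gt0 // ltr_wpDl.
have [g Gg [del del0 T'g]] :=
  Gamma_approx_uniform (Gamma_fun_derive1 C1T cT nT) (@segment_compact _ (m - 1) (M + 1)) e00.
have [_ [ng pg]] := HGamma _ Gg.
have [eta eta0 [d_eta gm_eta]] : exists2 eta, 0 < eta &
    d%:R * eta < Num.min del 1 /\ g (M + 1) * eta <= e0.
  by apply: exists_small_pos => //; rewrite lt_min del0 ltr01.
have [G GGG [c [c_eta RG]]] := HGG_dense _ _ a b _ Hpsi eta0.
have [_ [U [cU [_ [dG _]]]]] := HGG _ GGG.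
have dc : d%:R * c < Num.min del 1.
  by apply: le_lt_trans d_eta; rewrite ler_wpM2l ?ler0n ?ltW.
exists g, G, (Rf 0 - G 0); split => //.
exists (d%:R * (e0 * B + g (M + 1) * eta)); split.
  have -> : eps = d%:R * (e0 * (B + 1)) + e0 * (B + 1).
    by rewrite /e0; field; rewrite !lt0r_neq0 ?ltr_wpDl.
  have := mulr_gt0 e00 (ltr_wpDl B0 ltr01).
  have : d%:R * (e0 * B + g (M + 1) * eta) <= d%:R * (e0 * (B + 1)).
    by rewrite ler_wpM2l // mulrDr mulr1 lerD2l.
  lra.
move=> x cx; set r := Rf x; set w := G x + (Rf 0 - G 0).
have /andP[mr rM] : m <= r <= M := mRM x cx.
have /andP[wr_del] : (`|w - r| < del) && (`|w - r| < 1).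
  rewrite -lt_min; apply: le_lt_trans dc.
  exact: cube_shift_close (fun p _ => dRf p) (fun p cp => dG _ (cU _ cp)) RG x cx.
rewrite ltr_norml => /andP[wr1 wr2].
have Kr : `[m - 1, M + 1]%classic r by rewrite /= in_itv /=; apply/andP; split; lra.
have Kw : `[m - 1, M + 1]%classic w by rewrite /= in_itv /=; apply/andP; split; lra.
have c0 : 0 <= c by exact: le_trans (sqrtr_ge0 _) (RG x cx).
rewrite (grad_comp (dRf x) (C1T.1 r)).2.
apply: le_trans (enorm_scale_sub_le (pg w) (RB x ^~ cx) _) _.
  by move=> i; apply: le_trans (enorm_coord_sub _ _ i) (RG x cx).
have T'gw : `|derive1 T r - g w| < e0 by apply: T'g; rewrite // distrC.
have gwM : g w <= g (M + 1) by apply: ng; lra.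
rewrite ler_wpM2l // lerD //; first by rewrite ler_wpM2r // ltW.
by rewrite ler_pM // ?pg // ltW.
Qed.
End Approximation.

Theorem theorem6 (R : realType) (d : nat)
  (Gamma : set (R -> R)) (GG : set ('rV[R]_d -> R))
  (HGamma : forall g, Gamma g -> Gamma_fun g)
  (HGamma_dense : forall (K : set R) (h : R -> R) (eta : R),
     compact K -> {within K, continuous h} ->
     (forall x y, K x -> K y -> x <= y -> h x <= h y) ->
     (forall x, K x -> 0 <= h x) -> 0 < eta ->
     exists2 g, Gamma g & sup_lt K (fun x => `|h x - g x|) eta)
  (HGG : forall G, GG G -> convex_on setT G /\ C1_near_cube G)
  (HGG_dense : forall (N : nat) (psi : 'I_N -> R -> R) (a : 'I_N -> 'rV[R]_d)
     (b : 'I_N -> R) (eta : R),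
     (forall i, C1_real (psi i) /\ convex_fun1 (psi i)) -> 0 < eta ->
     exists2 G, GG G &
       sup_lt (cube d) (fun x => enorm (grad (ridge_sum psi a b) x - grad G x)) eta)
  (N : nat) (psi : 'I_N -> R -> R) (a : 'I_N -> 'rV[R]_d) (b : 'I_N -> R)
  (T : R -> R)
  (HT : C1_real T /\ convex_fun1 T /\ nondecr T)
  (Hpsi : forall i, C1_real (psi i) /\ convex_fun1 (psi i)) :
  let F := fun x => T (ridge_sum psi a b x) in
  (forall eps : R, 0 < eps ->
     exists g, exists G, exists beta : R, Gamma g /\ GG G /\
       sup_lt (cube d)
         (fun x => enorm (grad F x - g (G x + beta) *: grad G x)) eps)
  /\
  (forall g G (beta : R), Gamma g -> GG G ->
     exists Phi : 'rV[R]_d -> R,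
       C1_near_cube Phi /\ convex_on (cube d) Phi /\
       forall x, cube d x -> grad Phi x = g (G x + beta) *: grad G x).
Proof.
move=> F; have [C1T [cT nT]] := HT; split.
- move=> eps eps0.
  have [g [G [beta [Gg GGG approx]]]] := ridge_comp_grad_approx HGamma
    HGamma_dense HGG HGG_dense a b Hpsi C1T cT nT eps0.
  by exists g, G, beta.
- move=> g G beta Gg GGG; have [cG C1G] := HGG G GGG.
  have [Phi [C1Phi cPhi gradPhi]] :=
    Gamma_fun_grad_potential (Gamma_fun_shift beta (HGamma g Gg)) cG C1G.
  by exists Phi; split.
Qed.
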